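(* Let $f\in\mathbb{Z}[X]$ be a monic polynomial irreducible over $\mathbb{Q}$. Then every Vandermonde cut-and-project scheme corresponding to $f$ is generic.
   Context: Let $f$ have degree $d$ and (distinct) roots $\beta_1,\dots,\beta_d$, and set $\mathbf{z}_j=(1,\beta_j,\beta_j^2,\dots,\beta_j^{d-1})^\top$. The elementary real subspaces are $\mathrm{span}_\mathbb{R}\{\mathbf{z}_j\}$ for real $\beta_j$ and $\mathrm{span}_\mathbb{R}\{\mathrm{Re}\,\mathbf{z}_j,\mathrm{Im}\,\mathbf{z}_j\}$ for non-real $\beta_j$ (real and imaginary parts taken componentwise). A Vandermonde cut-and-project scheme corresponding to $f$ is obtained as follows: write $\mathbb{R}^d=\mathcal{Y}_1\oplus\mathcal{Y}_2$ where each $\mathcal{Y}_i$ is a direct sum of some of the elementary subspaces, $\dim\mathcal{Y}_1=n$, $1\le n<d$; let $Y_1\in\mathbb{R}^{d\times n}$, $Y_2\in\mathbb{R}^{d\times(d-n)}$ be matrices whose columns are the corresponding vectors $\mathbf{z}_j$ or pairs $\mathrm{Re}\,\mathbf{z}_j,\mathrm{Im}\,\mathbf{z}_j$ spanning $\mathcal{Y}_1$, $\mathcal{Y}_2$; set $Y=(Y_1,Y_2)$, $L=Y^{-1}$ and $\mathcal{L}=\{L\mathbf{r}:\mathbf{r}\in\mathbb{Z}^d\}$. The scheme is $(\mathcal{L}\subset\mathbb{R}^d,\mathbb{R}^n)$ with projections $\pi_\parallel(\mathbf{x})=(x_1,\dots,x_n)^\top$, $\pi_\perp(\mathbf{x})=(x_{n+1},\dots,x_d)^\top$.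 Such a scheme is generic if $\pi_\parallel|_{\mathcal{L}}$ and $\pi_\perp|_{\mathcal{L}}$ are injective and $\pi_\perp(\mathcal{L})$ is dense in $\mathbb{R}^{d-n}$. *)

From HB Require Import structures.
From mathcomp Require Import all_boot all_order all_algebra.
From mathcomp Require Import all_classical all_reals all_analysis.
From mathcomp Require complex.
Import complex.ComplexEqChoice complex.ComplexField.
Set Implicit Arguments.
Unset Strict Implicit.
Unset Printing Implicit Defensive.
Import Order.TTheory GRing.Theory Num.Theory.
Import numFieldNormedType.Exports.
Local Open Scope ring_scope.
Local Open Scope classical_set_scope.

Notation Cx R := (complex.complex R).

(* Throughout, d = n + m is the degree of f, with n = dim Y_1 and m = dim Y_2.
   Vectors of R^d are column vectors 'cV[R]_(n+m); pi_par = usubmx (first n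
   coordinates) and pi_perp = dsubmx (last m coordinates). *)

(* Column k of Y is  Re z_(r k)  (if im k = false) or  Im z_(r k) (if im k = true),
   where z_j = (1, beta_j, ..., beta_j^(d-1))^T.  The conditions say:
   - distinct columns carry distinct labels (r k, im k);
   - an Im-column only occurs for a non-real root;
   - for each conjugate pair only one representative root is used;
   - the two columns Re z_j, Im z_j of a pair lie in the same block
     (both among the first n columns, i.e. in Y_1, or both in Y_2).
   Since there are d = n + m columns, a counting argument shows the columns are
   exactly: z_j for each real root, and Re z_j, Im z_j for one representative of
   each non-real conjugate pair; i.e. Y_1 (first n columns) and Y_2 (last m
   columns) span complementary direct sums of elementary real subspaces. *)
Definition vandermonde_Y (R : realType) (n m : nat)
    (beta : 'I_(n + m) -> Cx R) (Y : 'M[R]_(n + m)) : Prop :=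
  exists (r : 'I_(n + m) -> 'I_(n + m)) (im : 'I_(n + m) -> bool),
    [/\ forall (i k : 'I_(n + m)),
          Y i k = (if im k then complex.Im (beta (r k) ^+ i)
                           else complex.Re (beta (r k) ^+ i)),
        injective (fun k => (r k, im k)),
        forall k, im k -> complex.Im (beta (r k)) != 0,
        forall k k', beta (r k') = complex.conjc (beta (r k)) -> r k' = r k &
        forall k k', r k = r k' -> (k < n)%N = (k' < n)%N].

Definition cp_lattice (R : realType) (d : nat) (L : 'M[R]_d) : set 'cV[R]_d :=
  [set L *m map_mx (fun z : int => z%:~R) v | v in [set: 'cV[int]_d]].

Definition generic_scheme (R : realType) (n m : nat) (L : 'M[R]_(n + m)) : Prop :=
  [/\ {in cp_lattice L &, injective (fun x : 'cV[R]_(n + m) => usubmx x)},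
      {in cp_lattice L &, injective (fun x : 'cV[R]_(n + m) => dsubmx x)} &
      dense [set dsubmx x | x in cp_lattice L]].

From HB Require Import structures.
From mathcomp Require Import all_boot all_order all_algebra.
From mathcomp Require Import all_classical all_reals all_analysis.
From mathcomp Require complex.
From mathcomp Require Import zify ring lra.
Import complex complex.ComplexEqChoice complex.ComplexField.
Import Order.TTheory GRing.Theory Num.Theory.
Import numFieldNormedType.Exports.
Set Implicit Arguments.
Unset Strict Implicit.
Unset Printing Implicit Defensive.
Local Open Scope ring_scope.
Local Open Scope complex_scope.

(* Let C be the (integer) companion matrix of f and L = Y^-1.  The columns of Y
   are real and imaginary parts of eigenvectors of C, so L C = D L with D block
   diagonal for the splitting R^d = R^n x R^m: the lattice L Z^d is D-stable and
   both projections commute with D.  As f is irreducible over Q, for every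
   nonzero s in Z^d the vectors s, C s, ..., C^(d-1) s form a basis, hence so do
   x, D x, ..., D^(d-1) x for x = L s.  If pi_par x (or pi_perp x) vanished, so
   would the corresponding projections of all D^l x: this gives injectivity.
   For density, Dirichlet's box principle yields s with pi_perp (L s) tiny; any
   target (0, y) is a real combination of the D^l L s, and rounding its
   coefficients gives a lattice point whose pi_perp-projection is close to y. *)

(** * Companion and Krylov matrices *)

Section Companion.
Variables (R : nzRingType) (d : nat).

Definition companion (p : {poly R}) : 'M[R]_d :=
  \matrix_(i, j) if i == d.-1 :> nat then - p`_j else (i.+1 == j)%:R.

Definition krylov (k : nat) (C : 'M[R]_d) (s : 'cV[R]_d) : 'M[R]_(d, k) :=
  \matrix_(j, i) (iter i (mulmx C) s) j 0.

End Companion.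

Lemma map_companion (A B : nzRingType) (f : {rmorphism A -> B}) d (p : {poly A}) :
  map_mx f (companion d p) = companion d (map_poly f p).
Proof.
by apply/matrixP => i j; rewrite !mxE coef_map; case: ifP; rewrite ?rmorphN ?rmorph_nat.
Qed.

Lemma map_krylov (A B : nzRingType) (f : {rmorphism A -> B}) d k
    (C : 'M[A]_d) (s : 'cV[A]_d) :
  map_mx f (krylov k C s) = krylov k (map_mx f C) (map_mx f s).
Proof.
apply/matrixP => j i; rewrite !mxE.
suff -> : iter i (mulmx (map_mx f C)) (map_mx f s) = map_mx f (iter i (mulmx C) s).
  by rewrite mxE.
by elim: (nat_of_ord i) => //= l ->; rewrite map_mxM.
Qed.

Lemma krylov_mulmx (R : comNzRingType) d k (C : 'M[R]_d) (s : 'cV[R]_d) (g : 'cV[R]_k) :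
  krylov k C s *m g = \sum_i g i 0 *: iter i (mulmx C) s.
Proof.
by apply/colP => j; rewrite !mxE summxE; apply: eq_bigr => i _; rewrite !mxE mulrC.
Qed.

Lemma mulmx_krylov (R : nzRingType) d d' k (L : 'M[R]_(d', d)) (C : 'M[R]_d)
    (D : 'M[R]_d') (s : 'cV[R]_d) :
  L *m C = D *m L -> L *m krylov k C s = krylov k D (L *m s).
Proof.
move=> LC; have iterL i : L *m iter i (mulmx C) s = iter i (mulmx D) (L *m s).
  by elim: i => //= i <-; rewrite !mulmxA LC.
apply/matrixP => j i; rewrite !mxE -iterL mxE.
by apply: eq_bigr => l _; rewrite mxE.
Qed.

Lemma krylov0 (R : nzRingType) d k (C : 'M[R]_d) : krylov k C 0 = 0.
Proof.
apply/matrixP => j i; rewrite !mxE.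
suff -> : iter i (mulmx C) (0 : 'cV_d) = 0 by rewrite mxE.
by elim: (i : nat) => //= l ->; rewrite mulmx0.
Qed.

Lemma rVpolyE (R : nzRingType) d (u : 'rV[R]_d) : rVpoly u = \sum_(i < d) u 0 i *: 'X^i.
Proof. by rewrite /rVpoly poly_def; apply: eq_bigr => i _; rewrite valK. Qed.

Lemma companion_vandermonde (R : comNzRingType) d (p : {poly R}) x (i : 'I_d) :
  p \is monic -> size p = d.+1 -> root p x ->
  \sum_(l < d) companion d p i l * x ^+ l = x ^+ i.+1.
Proof.
move=> p_monic size_p /rootP px; under eq_bigr do rewrite mxE.
case: eqP => [id | /eqP id].
  have lead_p : p`_d = 1 by move: p_monic; rewrite monicE /lead_coef size_p => /eqP.
  move: px; rewrite horner_coef size_p big_ord_recr /= lead_p mul1r => /eqP.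
  rewrite addrC addr_eq0 id prednK ?(leq_ltn_trans _ (ltn_ord i)) // => /eqP ->.
  by rewrite -sumrN; apply: eq_bigr => l _; rewrite mulNr.
have i1 : (i.+1 < d)%N by move: (ltn_ord i) id; lia.
rewrite (bigD1 (Ordinal i1)) //= eqxx mul1r big1 ?addr0 // => l /eqP li.
by rewrite (_ : (i.+1 == l) = false) ?mul0r //; apply/eqP => il; apply: li; apply: val_inj.
Qed.

Section CompanionField.
Variables (F : fieldType) (d : nat) (p : {poly F}).
Hypotheses (p_monic : p \is monic) (size_p : size p = d.+1).
Local Notation C := (companion d p).

Lemma row_companion (i : 'I_d) : row i C = poly_rV ('X^(i.+1) %% p).
Proof.
apply/rowP => j; rewrite !mxE; case: eqP => [id | /eqP id].
  have lead_p : p`_d = 1 by move: p_monic; rewrite monicE /lead_coef size_p => /eqP.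
  have -> : 'X^(i.+1) = 1 * p + ('X^d - p).
    by rewrite mul1r addrC subrK id prednK // (leq_ltn_trans _ (ltn_ord i)).
  rewrite modp_addl_mul_small ?coefB ?coefXn; last first.
    rewrite size_p ltnS; apply/leq_sizeP => k; rewrite leq_eqVlt => /orP [/eqP <-|dk].
      by rewrite coefB coefXn eqxx lead_p subrr.
    by rewrite coefB coefXn gtn_eqF // nth_default ?size_p // subrr.
  by rewrite ltn_eqF // sub0r.
rewrite modp_small; first by rewrite coefXn eq_sym.
by rewrite size_polyXn size_p ltnS; move: (ltn_ord i) id; lia.
Qed.

Lemma poly_rV_modp_mulmx_companion q :
  poly_rV (q %% p) *m C = poly_rV ((q * 'X) %% p).
Proof.
have p_neq0 : p != 0 by rewrite -size_poly_gt0 size_p.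
have size_r : (size (q %% p)%R <= d)%N by rewrite -ltnS -size_p ltn_modp.
rewrite mulmx_sum_row.
under eq_bigr do rewrite mxE row_companion -linearZ -modpZl.
rewrite -linear_sum -(big_morph _ (modpD p) (mod0p p)) mulrC -modp_mul.
congr (poly_rV (_ %% p)); rewrite -{2}(poly_rV_K size_r) rVpolyE mulr_sumr.
by apply: eq_bigr => i _; rewrite mxE -scalerAr exprS.
Qed.

Lemma poly_rV_modp_mulmx_iter q i k (s : 'M[F]_(d, k)) :
  poly_rV (q %% p) *m iter i (mulmx C) s = poly_rV ((q * 'X^i) %% p) *m s.
Proof.
elim: i q => [|i IH] q /=; first by rewrite expr0 mulr1.
by rewrite mulmxA poly_rV_modp_mulmx_companion IH exprS mulrA.
Qed.

Lemma poly_rV_modp_mulmx_krylov q (s : 'cV[F]_d) (v : 'rV[F]_d) :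
  poly_rV (q %% p) *m (krylov d C s *m v^T) = poly_rV ((q * rVpoly v) %% p) *m s.
Proof.
rewrite krylov_mulmx mulmx_sumr rVpolyE mulr_sumr.
rewrite (big_morph _ (modpD p) (mod0p p)) linear_sum mulmx_suml.
apply: eq_bigr => i _; rewrite mxE -scalemxAr poly_rV_modp_mulmx_iter.
by rewrite -scalerAr modpZl linearZ -scalemxAl.
Qed.

(* A kernel vector v gives a = rVpoly v with a(C) s = 0; as p is irreducible
   and deg a < deg p, a is invertible modulo p, whence s = 0. *)
Lemma krylov_unitmx (s : 'cV[F]_d) :
  irreducible_poly p -> s != 0 -> krylov d C s \in unitmx.
Proof.
move=> p_irr s_neq0; rewrite -unitmx_tr -row_free_unit; apply: inj_row_free => v.
move=> vK0; have Kv0 : krylov d C s *m v^T = 0.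
  by apply: trmx_inj; rewrite trmx_mul trmxK trmx0.
apply/eqP; apply: contraNT s_neq0 => v_neq0.
pose a := rVpoly v.
have a_neq0 : a != 0.
  by apply: contra_neq v_neq0 => a0; rewrite -[v]rVpolyK -/a a0 linear0.
have size_a : (size a < size p)%N by rewrite size_p ltnS size_poly.
have /Bezout_eq1_coprimepP [[u w] /= uw] : coprimep p a.
  rewrite irreducible_poly_coprime //; apply: contraTN size_a => /(dvdp_leq a_neq0).
  by rewrite leqNgt.
have wa : (w * a) %% p = 1.
  have -> : w * a = (- u) * p + 1 by rewrite -uw mulNr addKr.
  by rewrite modp_addl_mul_small // size_poly1; case: p_irr.
apply/eqP/colP => j; have := poly_rV_modp_mulmx_krylov ('X^j * w) s v.
rewrite Kv0 mulmx0 -mulrA -modp_mul wa mulr1 modp_small; last first.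
  by rewrite size_polyXn size_p ltnS.
by rewrite -rVpoly_delta rVpolyK -rowE => /rowP /(_ 0); rewrite !mxE.
Qed.

End CompanionField.

Lemma int_companion_krylov_unitmx (R : numFieldType) d (f : {poly int}) (s : 'cV[int]_d) :
  f \is monic -> size f = d.+1 ->
  irreducible_poly (map_poly (fun z : int => z%:~R : rat) f) -> s != 0 ->
  krylov d (map_mx (fun z : int => z%:~R : R) (companion d f))
    (map_mx (fun z : int => z%:~R : R) s) \in unitmx.
Proof.
move=> f_monic size_f f_irr s_neq0.
pose sQ := map_mx (fun z : int => z%:~R : rat) s.
have sQ_neq0 : sQ != 0.
  apply: contra s_neq0 => /eqP sQ0; apply/eqP/colP => k.
  by move/colP/(_ k): sQ0; rewrite !mxE => /eqP; rewrite intr_eq0 => /eqP.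
have size_fQ : size (map_poly (fun z : int => z%:~R : rat) f) = d.+1.
  by rewrite size_map_inj_poly ?size_f //; exact: intr_inj.
have fE : map_poly (@ratr R) (map_poly (fun z : int => z%:~R : rat) f) =
    map_poly (fun z : int => z%:~R : R) f.
  by rewrite -map_poly_comp; apply: eq_map_poly => z /=; rewrite ratr_int.
have sE : map_mx (@ratr R) sQ = map_mx (fun z : int => z%:~R : R) s.
  by apply/matrixP => i j; rewrite !mxE ratr_int.
have := krylov_unitmx (monic_map _ f_monic) size_fQ f_irr sQ_neq0.
by rewrite -(map_unitmx (@ratr R)) map_krylov map_companion fE sE map_companion.
Qed.

Section BlockDiagonal.
Variables (R : nzRingType) (n m : nat) (D1 : 'M[R]_n) (D2 : 'M[R]_m).
Local Notation D := (block_mx D1 0 0 D2).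

Lemma iter_mul_block_diag i (x : 'cV[R]_(n + m)) :
  iter i (mulmx D) x = col_mx (iter i (mulmx D1) (usubmx x)) (iter i (mulmx D2) (dsubmx x)).
Proof.
elim: i => [|i /= ->]; first by rewrite vsubmxK.
by rewrite mul_block_col !mul0mx addr0 add0r.
Qed.

Lemma usubmx_krylov_block_diag k (x : 'cV[R]_(n + m)) :
  usubmx (krylov k D x) = krylov k D1 (usubmx x).
Proof. by apply/matrixP => j i; rewrite !mxE iter_mul_block_diag col_mxEu. Qed.

Lemma dsubmx_krylov_block_diag k (x : 'cV[R]_(n + m)) :
  dsubmx (krylov k D x) = krylov k D2 (dsubmx x).
Proof. by apply/matrixP => j i; rewrite !mxE iter_mul_block_diag col_mxEd. Qed.

End BlockDiagonal.

Lemma block_diag_mx (R : nzRingType) n m (D : 'M[R]_(n + m)) :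
  (forall j k, D j k != 0 -> (j < n)%N = (k < n)%N) ->
  D = block_mx (ulsubmx D) 0 0 (drsubmx D).
Proof.
move=> D_block; rewrite -{1}(submxK D); congr block_mx; apply/matrixP => j k; rewrite !mxE.
  by apply/eqP/negP => /negP /D_block; rewrite /= ltn_ord ltnNge leq_addr.
by apply/eqP/negP => /negP /D_block; rewrite /= ltn_ord ltnNge leq_addr.
Qed.

Lemma unitmx_row_neq0 (F : fieldType) d (A : 'M[F]_d) i : A \in unitmx -> row i A != 0.
Proof.
rewrite -row_free_unit => /row_free_inj A_inj; apply/eqP => Ai0.
have /A_inj /matrixP /(_ 0 i) : delta_mx 0 i *m A = 0 *m A :> 'rV_d.
  by rewrite -rowE Ai0 mul0mx.
by rewrite !mxE !eqxx => /eqP; rewrite oner_eq0.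
Qed.

(** * Dirichlet's box principle *)

Lemma truncn_eq_norm_lt1 (R : archiRealFieldType) (x y : R) :
  0 <= x -> 0 <= y -> Num.truncn x = Num.truncn y -> `|x - y| < 1.
Proof.
move=> /truncn_itv /andP [x_ge x_lt] /truncn_itv /andP [y_ge y_lt] xy.
rewrite -natr1 in x_lt y_lt; rewrite xy in x_ge x_lt.
by rewrite ltr_norml; apply/andP; split; lra.
Qed.

Lemma norm_mulmx_col_le (R : realDomainType) p q (P : 'M[R]_(p, q)) (v : 'cV[R]_q)
    (b : R) i :
  (forall k, `|v k 0| <= b) -> `|(P *m v) i 0| <= (\sum_k `|P i k|) * b.
Proof.
move=> v_le; rewrite mxE mulr_suml; apply: le_trans (ler_norm_sum _ _ _) _.
by apply: ler_sum => k _; rewrite normrM ler_wpM2l.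
Qed.

Lemma row_abs_sum_le (R : realDomainType) p q (P : 'M[R]_(p, q)) i :
  \sum_k `|P i k| <= \sum_j \sum_k `|P j k|.
Proof. by rewrite (bigD1 i) //= lerDl sumr_ge0 // => j _; rewrite sumr_ge0. Qed.

Lemma iter_mulmx_col_le (R : realDomainType) q (M : 'M[R]_q) (v : 'cV[R]_q)
    (b : R) l i :
  (forall k, `|v k 0| <= b) ->
  `|(iter l (mulmx M) v) i 0| <= (1 + \sum_j \sum_k `|M j k|) ^+ l * b.
Proof.
move=> v_le; have b_ge0 : 0 <= b := le_trans (normr_ge0 _) (v_le i).
set K := 1 + _.
have K_ge0 : 0 <= K by rewrite addr_ge0 ?sumr_ge0 // => j _; rewrite sumr_ge0.
elim: l i => [|l IH] i /=; first by rewrite expr0 mul1r.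
move: (norm_mulmx_col_le M i IH) => /le_trans; apply.
rewrite exprS -mulrA ler_wpM2r ?mulr_ge0 ?exprn_ge0 //.
by apply: (le_trans (row_abs_sum_le M i)); rewrite /K lerDr.
Qed.

Lemma pigeonhole_count c p q M :
  (0 < c)%N -> (p < q)%N -> (M < c ^ p.+1)%N -> (M.+1 ^ p < (c ^ p).+1 ^ q)%N.
Proof.
move=> c_gt0 pq M_lt; set N := (c ^ p)%N.
have exp_mono a b k : (a <= b)%N -> (a ^ k <= b ^ k)%N.
  by move=> ab; elim: k => // k IH; rewrite !expnS leq_mul.
apply: (leq_ltn_trans (exp_mono _ (c * N)%N p _)); first by rewrite -expnS.
rewrite expnMn -/N -expnS; apply: (@leq_trans (N.+1 ^ p.+1)%N).
  by rewrite ltn_exp2r.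
by rewrite leq_pexp2l.
Qed.

(* The (N + 1)^q points u of {0..N}^q are sent by P into fewer boxes of side e;
   two of them share a box and s = u1 - u2. *)
Lemma dirichlet_mulmx (R : realType) p q (P : 'M[R]_(p, q)) (e : R) :
  (p < q)%N -> 0 < e ->
  exists2 s : 'cV[int]_q, s != 0 & forall i, `|(P *m map_mx intr s) i 0| < e.
Proof.
move=> pq e_gt0.
pose A := \sum_j \sum_k `|P j k|.
have A_ge0 : 0 <= A by rewrite sumr_ge0 // => j _; rewrite sumr_ge0.
pose c := (Num.truncn ((A + A) / e)).+1.
pose N := (c ^ p)%N.
pose vec (u : {ffun 'I_q -> 'I_N.+1}) : 'cV[R]_q := \col_k (u k : nat)%:R.
pose t u j := ((P *m vec u) j 0 + A * N%:R) / e.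
have vec_bound u j : - (A * N%:R) <= (P *m vec u) j 0 <= A * N%:R.
  rewrite -ler_norml; apply: (le_trans (norm_mulmx_col_le P j (b := N%:R) _)).
    by move=> k; rewrite mxE normr_nat ler_nat -ltnS.
  by rewrite ler_wpM2r ?ler0n ?row_abs_sum_le.
have t_ge0 u j : 0 <= t u j.
  apply: divr_ge0; last exact: ltW.
  by rewrite -lerBlDr sub0r; case/andP: (vec_bound u j).
pose M := Num.truncn ((A + A) * N%:R / e).
have t_le u j : (Num.truncn (t u j) < M.+1)%N.
  rewrite ltnS le_truncn // ler_pM2r ?invr_gt0 // mulrDl lerD2r.
  by case/andP: (vec_bound u j).
pose box u : {ffun 'I_p -> 'I_M.+1} := [ffun j => Ordinal (t_le u j)].
have /injectivePn [u1 [u2 u12 box12]] : ~~ injectiveb box.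
  apply/injectiveP => /leq_card; rewrite !card_ffun !card_ord; apply/negP.
  rewrite -ltnNge pigeonhole_count // truncn_lt_nat; last first.
    by rewrite divr_ge0 ?mulr_ge0 ?addr_ge0 // ltW.
  rewrite mulrAC expnS natrM ltr_pM2r ?ltr0n ?expn_gt0 //.
  exact: truncnS_gt.
pose s : 'cV[int]_q := \col_k ((u1 k : nat)%:Z - (u2 k : nat)%:Z).
have sE : map_mx intr s = vec u1 - vec u2 by apply/colP => k; rewrite !mxE rmorphB.
exists s.
  apply: contra u12 => /eqP s0; apply/eqP/ffunP => k; apply/val_inj/eqP.
  by move/colP/(_ k): s0; rewrite !mxE => /eqP; rewrite subr_eq0 eqz_nat.
move=> j; rewrite sE.
have t12 : `|t u1 j - t u2 j| < 1.
  apply: truncn_eq_norm_lt1 => //.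
  by move/ffunP/(_ j)/(congr1 val): box12; rewrite !ffunE.
have -> : (P *m (vec u1 - vec u2)) j 0 = (t u1 j - t u2 j) * e.
  by rewrite /t mulmxBr !mxE; field; rewrite gt_eqF.
by rewrite normrM (gtr0_norm e_gt0) -[X in _ < X]mul1r ltr_pM2r.
Qed.

Lemma dense_mx_approx (R : realType) p q (S : set 'M[R]_(p, q)) :
  (forall (y : 'M[R]_(p, q)) e, 0 < e ->
     exists2 x, S x & forall i j, `|y i j - x i j| < e) ->
  dense S.
Proof.
move=> approx O [y Oy] O_open.
have /nbhs_ballP [e /= e_gt0 yeO] : nbhs y O by apply: open_nbhs_nbhs.
have [x Sx xy] := approx y e e_gt0.
by exists x; split => //; apply: yeO; split.
Qed.

(** * A genericity criterion *)

Section Genericity.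
Variables (R : realType) (n m : nat) (L : 'M[R]_(n + m)) (C : 'M[int]_(n + m)).
Variables (D1 : 'M[R]_n) (D2 : 'M[R]_m).
Local Notation d := (n + m).
Local Notation intR := (map_mx (fun z : int => z%:~R : R)).
Hypotheses (n_gt0 : (0 < n)%N) (m_gt0 : (0 < m)%N) (L_unit : L \in unitmx).
Hypothesis L_intertwines : L *m intR C = block_mx D1 0 0 D2 *m L.
Hypothesis C_cyclic :
  forall s : 'cV[int]_d, s != 0 -> krylov d (intR C) (intR s) \in unitmx.

Lemma krylov_lattice_unitmx (s : 'cV[int]_d) :
  s != 0 -> krylov d (block_mx D1 0 0 D2) (L *m intR s) \in unitmx.
Proof.
by move=> s_neq0; rewrite -(mulmx_krylov d _ L_intertwines) unitmx_mul L_unit C_cyclic.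
Qed.

Lemma usubmx_lattice_eq0 (s : 'cV[int]_d) : usubmx (L *m intR s) = 0 -> s = 0.
Proof.
move=> u0; apply/eqP; apply: contraT => s_neq0.
have := unitmx_row_neq0 (lshift m (Ordinal n_gt0)) (krylov_lattice_unitmx s_neq0).
by rewrite -row_usubmx usubmx_krylov_block_diag u0 krylov0 row0 eqxx.
Qed.

Lemma dsubmx_lattice_eq0 (s : 'cV[int]_d) : dsubmx (L *m intR s) = 0 -> s = 0.
Proof.
move=> u0; apply/eqP; apply: contraT => s_neq0.
have := unitmx_row_neq0 (rshift n (Ordinal m_gt0)) (krylov_lattice_unitmx s_neq0).
by rewrite -row_dsubmx dsubmx_krylov_block_diag u0 krylov0 row0 eqxx.
Qed.

Lemma lattice_inj k (g : {linear 'cV[R]_d -> 'cV[R]_k}) :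
  (forall s : 'cV[int]_d, g (L *m intR s) = 0 -> s = 0) -> {in cp_lattice L &, injective g}.
Proof.
move=> g_eq0 x1 x2; rewrite !in_setE => -[s1 _ <-] [s2 _ <-] /eqP.
rewrite -subr_eq0 -linearB -mulmxBr -map_mxB => /eqP /g_eq0 /eqP.
by rewrite subr_eq0 => /eqP ->.
Qed.

Local Notation K := (1 + \sum_j \sum_k `|D2 j k|).

Let K_ge1 : 1 <= K.
Proof. by rewrite lerDl sumr_ge0 // => j _; rewrite sumr_ge0. Qed.

Lemma lattice_round (s : 'cV[int]_d) (y : 'cV[R]_m) (delta : R) :
  s != 0 -> (forall k, `|(dsubmx L *m intR s) k 0| <= delta) ->
  exists2 x, cp_lattice L x & forall i, `|y i 0 - dsubmx x i 0| <= d%:R * (K ^+ d * delta).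
Proof.
move=> s_neq0 s_small.
have delta_ge0 : 0 <= delta := le_trans (normr_ge0 _) (s_small (Ordinal m_gt0)).
pose A := krylov d (block_mx D1 0 0 D2) (L *m intR s).
have [c Ac] : exists c, A *m c = col_mx 0 y.
  by exists (invmx A *m col_mx 0 y); rewrite mulKVmx ?krylov_lattice_unitmx.
pose t : 'cV[int]_d := \col_l Num.floor (c l 0).
exists (A *m intR t).
  exists (krylov d C s *m t) => //.
  by rewrite map_mxM map_krylov mulmxA (mulmx_krylov d _ L_intertwines).
move=> i; have -> : y i 0 - dsubmx (A *m intR t) i 0 =
    (krylov d D2 (dsubmx L *m intR s) *m (c - intR t)) i 0.
  rewrite mul_dsub_mx -(dsubmx_krylov_block_diag D1) -/A mul_dsub_mx mulmxBr.
  by rewrite Ac linearB /= col_mxKd !mxE.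
apply: (le_trans (norm_mulmx_col_le _ i (b := 1) _)).
  move=> l; rewrite !mxE; have /andP [fl_le fl_gt] := floor_itv (c l 0).
  by rewrite intrD in fl_gt; rewrite ger0_norm ?subr_ge0 //; lra.
rewrite mulr1; apply: (@le_trans _ _ (\sum_(l < d) K ^+ d * delta)).
  apply: ler_sum => l _; rewrite mxE.
  apply: (le_trans (iter_mulmx_col_le D2 l i (b := delta) s_small)).
  by rewrite ler_wpM2r // (ler_weXn2l K_ge1) // ltnW.
by rewrite sumr_const card_ord mulr_natl.
Qed.

Lemma dense_dsubmx_lattice : dense [set dsubmx x | x in cp_lattice L].
Proof.
apply: dense_mx_approx => y e e_gt0.
have K_gt0 : 0 < K := lt_le_trans ltr01 K_ge1.
have d_gt0 : (0 < d)%N by rewrite addn_gt0 n_gt0.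
pose delta := e / (2 * d%:R * K ^+ d).
have delta_gt0 : 0 < delta by rewrite divr_gt0 // !mulr_gt0 ?ltr0n ?exprn_gt0.
have m_lt_d : (m < d)%N by rewrite -{1}[m]add0n ltn_add2r.
have [s s_neq0 s_small] := dirichlet_mulmx (dsubmx L) m_lt_d delta_gt0.
have [x Lx xy] := lattice_round y s_neq0 (fun k => ltW (s_small k)).
exists (dsubmx x); first by exists x.
move=> i j; rewrite ord1; apply: (le_lt_trans (xy i)).
have -> : d%:R * (K ^+ d * delta) = e / 2.
  by rewrite /delta; field; rewrite expf_neq0 ?gt_eqF // -natrD ltr0n.
by rewrite gtr_pMr // invf_lt1 // ltr1n.
Qed.

Lemma generic_scheme_of_intertwining : generic_scheme L.
Proof.
split; last exact: dense_dsubmx_lattice.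
  exact: (lattice_inj usubmx_lattice_eq0).
exact: (lattice_inj dsubmx_lattice_eq0).
Qed.

End Genericity.

(** * Real and imaginary parts of Vandermonde vectors *)

Lemma conjc_fixed (R : rcfType) (z : Cx R) : (conjc z == z) = (complex.Im z == 0).
Proof.
case: z => a b; rewrite /= eq_complex /= eqxx /=.
by rewrite eq_sym -subr_eq0 opprK -mulr2n mulrn_eq0.
Qed.

Lemma complex_eq0 (R : rcfType) (z : Cx R) :
  complex.Re z = 0 -> complex.Im z = 0 -> z = 0.
Proof. by case: z => a b /= -> ->. Qed.

Lemma horner_conjc (R : rcfType) (q : {poly R}) (x : Cx R) :
  (map_poly (real_complex R) q).[conjc x] = conjc (map_poly (real_complex R) q).[x].
Proof.
rewrite -horner_map /= -map_poly_comp; congr (_.[_]).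
by apply: eq_map_poly => c /=; rewrite oppr0.
Qed.

Definition reim (R : rcfType) (b : bool) (z : Cx R) : R :=
  if b then complex.Im z else complex.Re z.

Lemma reim_sum_realM (R : rcfType) b (I : finType) (a : I -> R) (z : I -> Cx R) :
  reim b (\sum_i (a i)%:C * z i) = \sum_i a i * reim b (z i).
Proof.
apply: (big_ind2 (fun x y => reim b x = y)) => [|x a1 y a2 <- <-|i _].
- by case: b.
- by case: b; case: x; case: y.
- by case: b; case: (z i) => c e /=; rewrite mul0r ?subr0 ?addr0.
Qed.

Lemma reim_mul (R : rcfType) b (x y : Cx R) :
  reim b (x * y) = complex.Re x * reim b y
                   + (if b then 1 else -1) * complex.Im x * reim (~~ b) y.
Proof. by case: b; case: x => a c; case: y => e g /=; ring. Qed.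

Section ConjugateRoots.
Variables (R : rcfType) (d : nat) (p : {poly R}) (beta : 'I_d -> Cx R).
Hypotheses (beta_inj : injective beta)
  (p_split : map_poly (real_complex R) p = \prod_(j < d) ('X - (beta j)%:P)).

Lemma conj_root_exists j : exists j', beta j' = conjc (beta j).
Proof.
have : root (map_poly (real_complex R) p) (conjc (beta j)).
  rewrite /root horner_conjc p_split horner_prod (bigD1 j) //=.
  by rewrite hornerXsubC subrr mul0r conjc0.
rewrite p_split /root horner_prod => /prodf_eq0 [j' _].
by rewrite hornerXsubC subr_eq0 => /eqP ->; exists j'.
Qed.

Definition conj_root j := odflt j [pick j' | beta j' == conjc (beta j)].

Lemma conj_rootE j : beta (conj_root j) = conjc (beta j).
Proof.
rewrite /conj_root; case: pickP => [j' /eqP // | none] /=.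
by have [j' j'E] := conj_root_exists j; move: (none j'); rewrite j'E eqxx.
Qed.

Lemma conj_root_inj : injective conj_root.
Proof.
by move=> j1 j2 /(congr1 beta); rewrite !conj_rootE => /(can_inj (@conjcK R)) /beta_inj.
Qed.

Lemma conj_root_fixed j : (conj_root j == j) = (complex.Im (beta j) == 0).
Proof.
by rewrite -(inj_eq beta_inj) conj_rootE conjc_fixed.
Qed.

End ConjugateRoots.

Section VandermondeMatrix.
Variables (R : rcfType) (n m : nat) (p : {poly R}) (beta : 'I_(n + m) -> Cx R).
Variables (Y : 'M[R]_(n + m)) (r : 'I_(n + m) -> 'I_(n + m)) (im : 'I_(n + m) -> bool).
Local Notation d := (n + m).
Hypotheses (beta_inj : injective beta)
  (p_split : map_poly (real_complex R) p = \prod_(j < d) ('X - (beta j)%:P)).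
Hypotheses (Y_def : forall i k, Y i k = reim (im k) (beta (r k) ^+ i))
  (rim_inj : injective (fun k => (r k, im k)))
  (im_nonreal : forall k, im k -> complex.Im (beta (r k)) != 0)
  (conj_rep : forall k k', beta (r k') = conjc (beta (r k)) -> r k' = r k)
  (same_block : forall k k', r k = r k' -> (k < n)%N = (k' < n)%N).

Local Notation sigma := (conj_root beta).
Let sigmaE := conj_rootE p_split.
Let sigma_inj := conj_root_inj beta_inj p_split.
Let sigma_fixed := conj_root_fixed beta_inj p_split.

Definition col_root k := if im k then sigma (r k) else r k.

(* Counting argument: sending an Im column to the conjugate of its root is
   injective, hence onto, so each non-real representative root owns both its
   Re and its Im column. *)
Lemma col_root_inj : injective col_root.
Proof.
have mixed k k' : im k' -> r k = sigma (r k') -> False.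
  move=> imk' rk; have rkk' : r k = r k' by apply: conj_rep; rewrite rk sigmaE.
  by move: (im_nonreal imk'); rewrite -sigma_fixed -rk rkk' eqxx.
move=> k k'; rewrite /col_root.
case imk : (im k); case imk' : (im k') => rkk'.
- by apply: rim_inj; rewrite /= imk imk' (sigma_inj rkk').
- by case: (mixed k' k); rewrite ?imk.
- by case: (mixed k k'); rewrite ?imk'.
- by apply: rim_inj; rewrite /= imk imk' rkk'.
Qed.

Lemma col_partner k : complex.Im (beta (r k)) != 0 ->
  exists k', [/\ k' != k, r k' = r k & im k' = ~~ im k].
Proof.
rewrite -sigma_fixed => nonreal.
have [g _ col_rootK] := injF_bij col_root_inj.
pose k' := g (if im k then r k else sigma (r k)).
suff [rk' imk'] : r k' = r k /\ im k' = ~~ im k.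
  by exists k'; split=> //; apply/eqP => kk'; move: imk'; rewrite kk'; case: (im k).
have := col_rootK (if im k then r k else sigma (r k)); rewrite -/k' /col_root.
case imk : (im k); case imk' : (im k') => e //.
- have rkk' : r k = r k' by apply: conj_rep; rewrite -e sigmaE.
  by move: nonreal; rewrite {1}rkk' e eqxx.
- by rewrite (sigma_inj e).
- have rk'k : r k' = r k by apply: conj_rep; rewrite e sigmaE.
  by move: nonreal; rewrite -e rk'k eqxx.
Qed.

Lemma size_split : size (map_poly (real_complex R) p) = d.+1.
Proof. by rewrite p_split size_prod_XsubC -[X in _ = X.+1]card_ord cardE enumT. Qed.

Lemma Y_unitmx : Y \in unitmx.
Proof.
rewrite -row_free_unit; apply: inj_row_free => w wY0.
pose q := map_poly (real_complex R) (rVpoly w).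
have qE x : q.[x] = \sum_(i < d) (w 0 i)%:C * x ^+ i.
  rewrite /q rVpolyE rmorph_sum horner_sum; apply: eq_bigr => i _.
  by rewrite /= map_polyZ map_polyXn hornerZ hornerXn.
have q_conj x : q.[conjc x] = conjc q.[x] by exact: horner_conjc.
have reim_q k : reim (im k) q.[beta (r k)] = 0.
  have := congr1 (fun v : 'rV_d => v 0 k) wY0; rewrite !mxE => <-.
  by rewrite qE reim_sum_realM; apply: eq_bigr => i _; rewrite Y_def.
have q_col k : q.[beta (r k)] = 0.
  have [real | nonreal] := eqVneq (complex.Im (beta (r k))) 0.
    have imk : im k = false by apply/negP => /im_nonreal; rewrite real eqxx.
    apply: complex_eq0; first by move: (reim_q k); rewrite imk.
    apply/eqP; rewrite -conjc_fixed -q_conj.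
    by move/eqP: real; rewrite -conjc_fixed => /eqP ->.
  have [k' [_ rk' imk']] := col_partner nonreal.
  move: (reim_q k) (reim_q k'); rewrite rk' imk'.
  by case: (im k) => /= h1 h2; apply: complex_eq0.
have q_root j : q.[beta j] = 0.
  have [g _ col_rootK] := injF_bij col_root_inj.
  rewrite -(col_rootK j) /col_root; case: (im _); last exact: q_col.
  by rewrite sigmaE q_conj q_col conjc0.
have : q = 0.
  apply: (@roots_geq_poly_eq0 _ _ [seq beta j | j <- enum 'I_d]).
  - by apply/allP => x /mapP [j _ ->]; apply/eqP; exact: q_root.
  - by rewrite map_inj_uniq ?enum_uniq.
  - by rewrite size_map size_enum_ord size_map_poly size_poly.
by move/eqP; rewrite map_poly_eq0 => /eqP w0; rewrite -[w]rVpolyK w0 linear0.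
Qed.

(* The matrix of C in the basis Y: on the pair Re z, Im z of a root a + ib it is
   the block [[a, b], [-b, a]], since C z = (a + ib) z. *)
Definition jordanY : 'M[R]_d := \matrix_(j, k)
  if j == k then complex.Re (beta (r k))
  else if r j == r k then (if im k then 1 else -1) * complex.Im (beta (r k))
  else 0.

Lemma jordanY_block j k : jordanY j k != 0 -> (j < n)%N = (k < n)%N.
Proof.
rewrite mxE; have [-> // | _] := eqVneq j k.
by have [/same_block // | _] := eqVneq (r j) (r k); rewrite eqxx.
Qed.

Lemma companion_mulmx_Y : companion d p *m Y = Y *m jordanY.
Proof.
apply/matrixP => i k; rewrite !mxE.
have p_root : root (map_poly (real_complex R) p) (beta (r k)).
  by rewrite /root p_split horner_prod (bigD1 (r k)) //= hornerXsubC subrr mul0r.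
have p_monic : map_poly (real_complex R) p \is monic.
  by rewrite p_split monic_prod_XsubC.
rewrite -[LHS]/(\sum_l companion d p i l * Y l k).
under eq_bigr do rewrite Y_def.
rewrite -reim_sum_realM.
have companionC l : (companion d p i l)%:C = companion d (map_poly (real_complex R) p) i l.
  by rewrite -map_companion [RHS]mxE.
under eq_bigr do rewrite companionC.
rewrite companion_vandermonde ?size_split // exprS reim_mul.
rewrite (bigD1 k) //= mxE eqxx Y_def mulrC; congr (_ + _).
have [real | nonreal] := eqVneq (complex.Im (beta (r k))) 0.
  rewrite real mulr0 mul0r big1 // => j jk.
  by rewrite mxE (negPf jk) real mulr0 !if_same mulr0.
have [k' [k'k rk' imk']] := col_partner nonreal.
rewrite (bigD1 k') //= mxE (negPf k'k) rk' eqxx big1 ?addr0 => [|j /andP [jk jk']].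
  by rewrite Y_def rk' imk' mulrC; case: (im k); rewrite ?mul1r ?mulN1r.
rewrite mxE (negPf jk); have [rj | _] := eqVneq (r j) (r k); last by rewrite mulr0.
suff : (j == k) || (j == k') by rewrite (negPf jk) (negPf jk').
have [imj | imj] := eqVneq (im j) (im k).
  by apply/orP; left; apply/eqP/rim_inj; rewrite /= rj imj.
apply/orP; right; apply/eqP/rim_inj; rewrite /= rj rk' imk'.
by move: imj; case: (im j); case: (im k).
Qed.

Lemma invmx_Y_intertwines :
  invmx Y *m companion d p = block_mx (ulsubmx jordanY) 0 0 (drsubmx jordanY) *m invmx Y.
Proof.
rewrite -block_diag_mx; last exact: jordanY_block.
by rewrite -[jordanY](mulKmx Y_unitmx) -companion_mulmx_Y !mulmxA mulmxK ?Y_unitmx.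
Qed.

End VandermondeMatrix.

Theorem theorem1 (R : realType) (f : {poly int}) (n m : nat)
    (beta : 'I_(n + m) -> Cx R) (Y : 'M[R]_(n + m)) :
  f \is monic ->
  irreducible_poly (map_poly (fun z : int => z%:~R : rat) f) ->
  (0 < n)%N -> (0 < m)%N ->
  injective beta ->
  map_poly (fun z : int => z%:~R : Cx R) f = \prod_(j < n + m) ('X - (beta j)%:P) ->
  vandermonde_Y beta Y ->
  generic_scheme (invmx Y).
Proof.
move=> f_monic f_irr n_gt0 m_gt0 beta_inj f_split.
move=> [r [im [Y_def rim_inj im_nonreal conj_rep same_block]]].
pose fR := map_poly (fun z : int => z%:~R : R) f.
have fR_split : map_poly (real_complex R) fR = \prod_(j < n + m) ('X - (beta j)%:P).
  by rewrite -f_split -map_poly_comp; apply: eq_map_poly => z /=; rewrite rmorph_int.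
have size_f : size f = (n + m).+1.
  rewrite -(size_split fR_split) size_map_poly size_map_inj_poly //; exact: intr_inj.
pose D := jordanY beta r im.
apply: (generic_scheme_of_intertwining (C := companion (n + m) f)
         (D1 := ulsubmx D) (D2 := drsubmx D) n_gt0 m_gt0).
- by rewrite unitmx_inv (Y_unitmx beta_inj fR_split Y_def rim_inj im_nonreal conj_rep).
- rewrite map_companion.
  exact: invmx_Y_intertwines beta_inj fR_split Y_def rim_inj im_nonreal conj_rep same_block.
- by move=> s; apply: int_companion_krylov_unitmx.
Qed.
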